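(* Let $\mathbf U$ be a real $3\times3$ positive-definite symmetric matrix, $|\hat{\mathbf e}|=1$, $\hat{\mathbf U}=(-\mathbf I+2\hat{\mathbf e}\otimes\hat{\mathbf e})\mathbf U(-\mathbf I+2\hat{\mathbf e}\otimes\hat{\mathbf e})$, and let $\hat{\mathbf R}\in\mathrm{SO}(3)$, nonzero $\mathbf a,\mathbf n\in\mathbb R^3$ satisfy $\hat{\mathbf R}\hat{\mathbf U}=\mathbf U+\mathbf a\otimes\mathbf n$. Suppose the cofactor conditions hold: (CC1) the middle eigenvalue of $\mathbf U$ equals $1$; (CC2) $\mathbf a\cdot\mathbf U\,\mathrm{cof}(\mathbf U^2-\mathbf I)\mathbf n=0$; (CC3) $\mathrm{tr}\,\mathbf U^2-\det\mathbf U^2-\frac{|\mathbf a|^2|\mathbf n|^2}{4}-2\ge0$. For $f\in[0,1]$ let $\mathbf C_f=(\mathbf U+f\,\mathbf n\otimes\mathbf a)(\mathbf U+f\,\mathbf a\otimes\mathbf n)$, whose middle eigenvalue is $1$ for every $f\in[0,1]$, and denote its other two eigenvalues by $\lambda_1(f)^2\le1\le\lambda_3(f)^2$. Then $\lambda_1(f)^2<1<\lambda_3(f)^2$ for all $f\in[0,1]$ with $f\neq1/2$. In particular, the eigenvalues $\lambda_1,\lambda_3$ of $\mathbf U$ other than the middle one satisfy $\lambda_1<1<\lambda_3$.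
   Context: $\mathbf a\otimes\mathbf n$ is the matrix $\mathbf x\mapsto(\mathbf n\cdot\mathbf x)\mathbf a$; $\mathrm{cof}\,\mathbf A$ is the cofactor matrix of $\mathbf A$, $(\mathrm{cof}\,\mathbf A)_{ij}=(-1)^{i+j}\det$ of the submatrix obtained by deleting row $i$ and column $j$. $\lambda_1(f),\lambda_3(f)$ are taken positive. *)

From HB Require Import structures.
From mathcomp Require Import all_boot all_order all_algebra.
From mathcomp Require Import reals.
Set Implicit Arguments. Unset Strict Implicit. Unset Printing Implicit Defensive.
Import Order.TTheory GRing.Theory Num.Theory.
Local Open Scope ring_scope.

Definition dot {R : realType} (u v : 'cV[R]_3) : R := (u^T *m v) 0 0.

(* a (x) n : x |-> (n . x) a, i.e. the matrix a n^T *)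
Definition tens {R : realType} (a n : 'cV[R]_3) : 'M[R]_3 := a *m n^T.

Definition cofmx {R : realType} (A : 'M[R]_3) : 'M[R]_3 :=
  \matrix_(i, j) cofactor A i j.

Definition sym_posdef {R : realType} (U : 'M[R]_3) : Prop :=
  U^T = U /\ forall x : 'cV[R]_3, x != 0 -> 0 < dot x (U *m x).

Definition rot3 {R : realType} (Q : 'M[R]_3) : Prop :=
  Q^T *m Q = 1%:M /\ \det Q = 1.

Definition ordered_eigs {R : realType} (A : 'M[R]_3) (l1 l2 l3 : R) : Prop :=
  l1 <= l2 /\ l2 <= l3 /\
  char_poly A = ('X - l1%:P) * ('X - l2%:P) * ('X - l3%:P).

Definition Cf {R : realType} (U : 'M[R]_3) (a n : 'cV[R]_3) (f : R) : 'M[R]_3 :=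
  (U + f *: tens n a) *m (U + f *: tens a n).

From HB Require Import structures.
From mathcomp Require Import all_boot all_order all_algebra.
From mathcomp Require Import reals.
From mathcomp Require Import ring lra.
Import Order.TTheory GRing.Theory Num.Theory.
Local Open Scope ring_scope.

(* With Q = -I + 2 e(x)e, so that Q^2 = I, the twinning equation makes
   (U + a(x)n)^T (U + a(x)n) = Q U^2 Q.  Hence, writing
   C_f = (U + f a(x)n)^T (U + f a(x)n), det C_f = det U^2 for every f, and
   tr C_f is a quadratic in f with tr C_0 = tr C_1, i.e.
   tr C_f = tr U^2 + |a|^2 |n|^2 (f^2 - f).  The polynomial det (C_f - I) has
   degree at most 2 in f; it vanishes at f = 0 by CC1, at f = 1 because C_1 is
   conjugate to U^2, and its slope at 0 vanishes by CC2, so 1 is an eigenvalue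
   of every C_f.  If 1 is one of s1 <= s2 <= s3, then s1 + s2 + s3 - s1 s2 s3 - 2
   is (1 - s1)(s3 - 1) when s2 = 1 and is <= 0 otherwise; for C_f this quantity
   is the CC3 expression plus |a|^2 |n|^2 (f - 1/2)^2, positive for f <> 1/2.
   The claim on U is the case f = 0: the eigenvalues of C_0 = U^2 are the
   squares of the positive eigenvalues of U. *)

Section VectorAlgebra.
Variable R : realType.

Lemma tr_tens (a n : 'cV[R]_3) : (tens a n)^T = tens n a.
Proof. by rewrite /tens trmx_mul trmxK. Qed.

Lemma mulmx_tens (a b c d : 'cV[R]_3) : tens a b *m tens c d = dot b c *: tens a d.
Proof.
by rewrite /tens /dot mulmxA -(mulmxA a) {1}[b^T *m c]mx11_scalar mul_mx_scalar -scalemxAl.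
Qed.

Lemma mulmx_tensl (M : 'M[R]_3) (a n : 'cV[R]_3) : M *m tens a n = tens (M *m a) n.
Proof. by rewrite /tens mulmxA. Qed.

Lemma tens_mulmx (M : 'M[R]_3) (a n : 'cV[R]_3) : tens a n *m M = tens a (M^T *m n).
Proof. by rewrite /tens -mulmxA trmx_mul trmxK. Qed.

Lemma mxtrace_tens (a n : 'cV[R]_3) : \tr (tens a n) = dot n a.
Proof. by rewrite /tens mxtrace_mulC /dot /mxtrace big_ord1. Qed.

Lemma dotC (a b : 'cV[R]_3) : dot a b = dot b a.
Proof. by rewrite /dot -[b^T *m a]trmxK trmx_mul trmxK [in RHS]mxE. Qed.

Lemma dot_gt0 (a : 'cV[R]_3) : a != 0 -> 0 < dot a a.
Proof.
move=> a_neq0; have -> : dot a a = \sum_i a i 0 ^+ 2.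
  by rewrite /dot mxE; apply: eq_bigr => i _; rewrite mxE expr2.
rewrite lt_def sumr_ge0 ?andbT => [|i _]; last exact: sqr_ge0.
apply: contra a_neq0 => /eqP/psumr_eq0P a0; apply/eqP/matrixP => i j.
by rewrite ord1 mxE; apply/eqP; rewrite -sqrf_eq0 a0 // => k _; apply: sqr_ge0.
Qed.

Lemma bilinear_form_tr (M : 'M[R]_3) (x y : 'cV[R]_3) :
  (x^T *m M *m y) 0 0 = (y^T *m M^T *m x) 0 0.
Proof. by rewrite -[in LHS](trmxK (x^T *m M *m y)) mxE !trmx_mul trmxK mulmxA. Qed.

Lemma cofmx_tr (A : 'M[R]_3) : (cofmx A)^T = cofmx A^T.
Proof. by apply/matrixP => i j; rewrite !mxE cofactor_tr. Qed.

End VectorAlgebra.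

Local Notation o0 := (@Ordinal 3 0 isT).
Local Notation o1 := (@Ordinal 3 1 isT).
Local Notation o2 := (@Ordinal 3 2 isT).

(* [ring] compares entries syntactically, and the same entry of M is reached
   through different proofs of [i < 3]; reindexing M by naturals merges them. *)
Ltac nat_entries M :=
  let m := fresh "m" in let E := fresh "E" in
  pose m := fun x y : nat => M (inord x) (inord y);
  assert (E : forall i j, M i j = m i j) by (move=> i j; by rewrite /m !inord_val);
  rewrite ?E /bump /=; clear E.

Ltac expand_mx := do 4 rewrite ?big_ord_recr ?big_ord0 ?mxE /=.

Section Determinant3.
Variable R : comNzRingType.

Lemma det_mx22 (A : 'M[R]_2) : \det A =
  A (@Ordinal 2 0 isT) (@Ordinal 2 0 isT) * A (@Ordinal 2 1 isT) (@Ordinal 2 1 isT)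
  - A (@Ordinal 2 0 isT) (@Ordinal 2 1 isT) * A (@Ordinal 2 1 isT) (@Ordinal 2 0 isT).
Proof.
rewrite (expand_det_row _ ord0) !big_ord_recl big_ord0 /cofactor !det_mx11 !mxE.
nat_entries A; ring.
Qed.

Lemma det_mx33 (A : 'M[R]_3) : \det A =
  A o0 o0 * (A o1 o1 * A o2 o2 - A o1 o2 * A o2 o1)
  - A o0 o1 * (A o1 o0 * A o2 o2 - A o1 o2 * A o2 o0)
  + A o0 o2 * (A o1 o0 * A o2 o1 - A o1 o1 * A o2 o0).
Proof.
rewrite (expand_det_row _ ord0) !big_ord_recl big_ord0 /cofactor !det_mx22 !mxE.
nat_entries A; ring.
Qed.

End Determinant3.

Definition quad_pencil {R : realType} (A : 'M[R]_3) (b n : 'cV[R]_3) (k f : R) :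
  'M[R]_3 := A + f *: (tens b n + tens n b) + (f ^+ 2 * k) *: tens n n.

Section Pencils.
Variable R : realType.

Lemma det_add_rank1 (A : 'M[R]_3) (a n : 'cV[R]_3) (f : R) :
  \det (A + f *: tens a n) = \det A + f * (\det (A + tens a n) - \det A).
Proof.
rewrite /tens !det_mx33; expand_mx; nat_entries A; nat_entries a; nat_entries n; ring.
Qed.

Lemma mxtrace_quad_pencil (A : 'M[R]_3) (b n : 'cV[R]_3) (k f : R) :
  \tr (quad_pencil A b n k f) = \tr A + f * (2 * dot n b) + f ^+ 2 * k * dot n n.
Proof. by rewrite /quad_pencil !(mxtraceD, mxtraceZ, mxtrace_tens) [dot b n]dotC; ring. Qed.

Lemma det_quad_pencil_eq0 (A : 'M[R]_3) (b n : 'cV[R]_3) (k : R) :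
  \det A = 0 -> \det (quad_pencil A b n k 1) = 0 ->
  (b^T *m cofmx A *m n) 0 0 + (n^T *m cofmx A *m b) 0 0 = 0 ->
  forall f, \det (quad_pencil A b n k f) = 0.
Proof.
move=> detA0 det10 slope0 f.
pose L := (b^T *m cofmx A *m n) 0 0 + (n^T *m cofmx A *m b) 0 0.
(* Quadratic in f: the f-dependent part has rank two, and its 2x2 minors are
   those of f (b n^T + n b^T) since the remaining term is a multiple of n n^T. *)
suff -> : \det (quad_pencil A b n k f) =
    \det A + f * L + f ^+ 2 * (\det (quad_pencil A b n k 1) - \det A - L).
  by rewrite detA0 det10 [L]slope0; ring.
rewrite /L /quad_pencil /tens /cofmx !det_mx33; expand_mx.
rewrite /cofactor !det_mx22 !mxE.
nat_entries A; nat_entries b; nat_entries n; ring.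
Qed.

End Pencils.

Section HalfTurn.
Context {R : realType} (e : 'cV[R]_3).

Definition half_turn : 'M[R]_3 := - 1%:M + 2%:R *: tens e e.

Lemma tr_half_turn : half_turn^T = half_turn.
Proof. by rewrite /half_turn linearD /= linearN /= trmx1 linearZ /= tr_tens. Qed.

Lemma half_turn_invol : dot e e = 1 -> half_turn *m half_turn = 1%:M.
Proof.
move=> e1; have -> : half_turn *m half_turn = 1%:M + (4%:R * (dot e e - 1)) *: tens e e.
  apply/matrixP; case=> [[|[|[|//]]] ?]; case=> [[|[|[|//]]] ?];
  rewrite /half_turn /tens /dot; expand_mx; nat_entries e; ring.
by rewrite e1 subrr mulr0 scale0r addr0.
Qed.

End HalfTurn.

Section Strain.
Variables (R : realType) (U : 'M[R]_3) (a n : 'cV[R]_3).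
Hypothesis symU : U^T = U.

Lemma Cf_gram (f : R) : Cf U a n f = (U + f *: tens a n)^T *m (U + f *: tens a n).
Proof. by rewrite /Cf [(_ + _)^T]linearD /= [(_ *: _)^T]linearZ /= symU tr_tens. Qed.

Lemma Cf_pencil (f : R) : Cf U a n f = quad_pencil (U *m U) (U *m a) n (dot a a) f.
Proof.
rewrite /Cf /quad_pencil mulmxDl !mulmxDr -!scalemxAl -!scalemxAr mulmx_tensl tens_mulmx.
by rewrite symU mulmx_tens !scalerA scalerDr !addrA -expr2.
Qed.

End Strain.

Section OrderedEigenvalues.
Context {R : realType}.

Lemma horner_char_poly n (A : 'M[R]_n) (x : R) : (char_poly A).[x] = \det (x%:M - A).
Proof.
rewrite /char_poly -(horner_evalE x) -det_map_mx; congr (\det _); apply/matrixP => i j.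
by rewrite !mxE /= horner_evalE hornerD hornerN hornerMn hornerX hornerC.
Qed.

Section OrderedEigs.
Context {A : 'M[R]_3} {s1 s2 s3 : R} (eigA : ordered_eigs A s1 s2 s3).

Lemma ordered_eigs_det_sub (x : R) : \det (x%:M - A) = (x - s1) * (x - s2) * (x - s3).
Proof. by case: eigA => _ [_ chA]; rewrite -horner_char_poly chA !hornerE. Qed.

Lemma ordered_eigs_det : \det A = s1 * s2 * s3.
Proof. by have := ordered_eigs_det_sub 0; rewrite raddf0 sub0r -scaleN1r detZ; lra. Qed.

Lemma ordered_eigs_tr : \tr A = s1 + s2 + s3.
Proof.
case: eigA => _ [_ chA]; apply: oppr_inj; rewrite -(char_poly_trace A) // chA.
rewrite !(mulrBr, mulrBl, coefB, coefMX, coefMC, coefX, coefC) /=; ring.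
Qed.

Lemma ordered_eigs_sqr : 0 <= s1 ->
  ordered_eigs (A *m A) (s1 ^+ 2) (s2 ^+ 2) (s3 ^+ 2).
Proof.
move=> s1_ge0; have [le12 [le23 _]] := eigA.
have s2_ge0 : 0 <= s2 by apply: le_trans le12.
have s3_ge0 : 0 <= s3 by apply: le_trans le23.
split; [by rewrite ler_sqr ?nnegrE | split; first by rewrite ler_sqr ?nnegrE].
set P := char_poly _; set Q := _ * _.
have PQ x : (P - Q).[x ^+ 2] = 0.
  rewrite hornerD hornerN horner_char_poly !hornerE.
  have -> : (x ^+ 2)%:M - A *m A = (x%:M - A) *m (x%:M + A).
    by rewrite mulmxDr !mulmxBl -scalar_mxM -expr2 scalar_mxC addrA subrK.
  rewrite det_mulmx -[x%:M + A]opprK opprD -raddfN -[- (_ - A)]scaleN1r detZ.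
  rewrite !ordered_eigs_det_sub; ring.
apply/eqP; rewrite -subr_eq0; apply/eqP.
apply: (@roots_geq_poly_eq0 R (P - Q) [seq (i%:R : R) ^+ 2 | i <- iota 0 4]).
- by apply/allP => _ /mapP [i _ ->]; rewrite /root PQ.
- rewrite map_inj_in_uniq ?iota_uniq // => i j _ _ /eqP.
  by rewrite -!natrX eqr_nat eqn_exp2r // => /eqP.
- apply: leq_trans (size_polyD _ _) _; rewrite size_polyN size_char_poly.
  by rewrite /Q !size_mul ?polyXsubC_eq0 ?mulf_neq0 ?polyXsubC_eq0 // !size_XsubC.
Qed.

End OrderedEigs.

End OrderedEigenvalues.

Section MiddleEigenvalue.
Variable R : realDomainType.

Lemma middle_eig_one (s1 s2 s3 : R) : s1 <= s2 -> s2 <= s3 ->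
  (1 - s1) * (1 - s2) * (1 - s3) = 0 -> 0 < s1 + s2 + s3 - s1 * s2 * s3 - 2 ->
  [/\ s2 = 1, s1 < 1 & 1 < s3].
Proof.
move=> le12 le23 /eqP; rewrite !mulf_eq0 !subr_eq0 => /orP[/orP[]|] /eqP eq1 gap; subst.
- have : 0 <= (s2 - 1) * (s3 - 1) by apply: mulr_ge0; lra.
  nra.
- have : 0 < (1 - s1) * (s3 - 1) by nra.
  split=> //; nra.
- have : 0 <= (1 - s1) * (1 - s2) by apply: mulr_ge0; lra.
  nra.
Qed.

End MiddleEigenvalue.

Lemma sym_posdef_eig_gt0 (R : realType) (U : 'M[R]_3) (x : R) :
  sym_posdef U -> \det (x%:M - U) = 0 -> 0 < x.
Proof.
move=> [symU posU] detx; have /eigenvalueP [v vU v_neq0] : eigenvalue U x.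
  by rewrite eigenvalue_root_char /root horner_char_poly detx.
have Ux : U *m v^T = x *: v^T by rewrite -{1}symU -trmx_mul vU linearZ.
have vT_neq0 : v^T != 0 by rewrite -(inj_eq (@trmx_inj _ _ _)) trmxK trmx0.
by have := posU _ vT_neq0; rewrite Ux /dot -scalemxAr mxE pmulr_lgt0 // dot_gt0.
Qed.

Lemma det_sqr_sub1_eq0 (R : realType) (U : 'M[R]_3) :
  \det (1%:M - U) = 0 -> \det (U *m U - 1%:M) = 0.
Proof.
move=> detU1; have -> : U *m U - 1%:M = (U + 1%:M) *m (U - 1%:M).
  by rewrite mulmxDl mulmxBr mul1mx mulmx1 addrA subrK.
by rewrite det_mulmx -opprB -scaleN1r detZ detU1 !mulr0.
Qed.

Section TwinEquation.
Context {R : realType} {U Rh Q : 'M[R]_3} {a n : 'cV[R]_3}.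
Hypotheses (symU : U^T = U) (symQ : Q^T = Q) (Q_invol : Q *m Q = 1%:M) (rotRh : rot3 Rh).
Hypothesis twin : Rh *m (Q *m U *m Q) = U + tens a n.

Lemma det_twin : \det (U + tens a n) = \det U.
Proof.
have detQ2 : \det Q * \det Q = 1 by rewrite -det_mulmx Q_invol det1.
by rewrite -twin !det_mulmx rotRh.2 mul1r mulrAC detQ2 mul1r.
Qed.

Lemma Cf1_conj : Cf U a n 1 = Q *m (U *m U) *m Q.
Proof.
rewrite Cf_gram // scale1r -twin trmx_mul -(mulmxA _ Rh^T) (mulmxA Rh^T) rotRh.1 mul1mx.
by rewrite !trmx_mul symQ symU !mulmxA -(mulmxA (Q *m U) Q Q) Q_invol mulmx1.
Qed.

Lemma det_Cf (f : R) : \det (Cf U a n f) = \det (U *m U).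
Proof.
by rewrite Cf_gram // det_mulmx det_tr det_add_rank1 det_twin subrr mulr0 addr0 det_mulmx.
Qed.

Lemma tr_Cf (f : R) : \tr (Cf U a n f) = \tr (U *m U) + dot a a * dot n n * (f ^+ 2 - f).
Proof.
have : \tr (Cf U a n 1) = \tr (U *m U).
  by rewrite Cf1_conj mxtrace_mulC (mulmxA Q Q) Q_invol mul1mx.
rewrite !Cf_pencil // !mxtrace_quad_pencil expr1n !mul1r => tr1.
have -> : 2 * dot n (U *m a) = - (dot a a * dot n n) by lra.
ring.
Qed.

Hypothesis CC1 : \det (1%:M - U) = 0.
Hypothesis CC2 : (a^T *m U *m cofmx (U *m U - 1%:M) *m n) 0 0 = 0.

Lemma det_Cf_sub1 (f : R) : \det (Cf U a n f - 1%:M) = 0.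
Proof.
set A := U *m U - 1%:M.
have pencil g : Cf U a n g - 1%:M = quad_pencil A (U *m a) n (dot a a) g.
  by rewrite Cf_pencil // /quad_pencil /A !(addrAC _ (- 1%:M)).
rewrite pencil; apply: det_quad_pencil_eq0; first exact: det_sqr_sub1_eq0.
  rewrite -pencil Cf1_conj.
  have -> : Q *m (U *m U) *m Q - 1%:M = Q *m A *m Q.
    by rewrite /A mulmxBr mulmxBl mulmx1 Q_invol.
  by rewrite !det_mulmx det_sqr_sub1_eq0 // mulr0 mul0r.
have symA : A^T = A by rewrite /A [(_ - _)^T]linearB /= trmx_mul symU trmx1.
by rewrite [(n^T *m _ *m _) 0 0]bilinear_form_tr cofmx_tr symA trmx_mul symU CC2 addr0.
Qed.

Hypotheses (a_neq0 : a != 0) (n_neq0 : n != 0).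
Hypothesis CC3 :
  0 <= \tr (U *m U) - \det (U *m U) - dot a a * dot n n / 4%:R - 2%:R.

Lemma Cf_middle_eig (f s1 s2 s3 : R) : f != 2%:R^-1 ->
  ordered_eigs (Cf U a n f) s1 s2 s3 -> [/\ s2 = 1, s1 < 1 & 1 < s3].
Proof.
move=> f_neq_half eigC; have [le12 [le23 _]] := eigC.
apply: middle_eig_one => //.
  by rewrite -(ordered_eigs_det_sub eigC 1) -opprB -scaleN1r detZ det_Cf_sub1 mulr0.
rewrite -(ordered_eigs_tr eigC) -(ordered_eigs_det eigC) tr_Cf det_Cf.
have k_gt0 : 0 < dot a a * dot n n by rewrite mulr_gt0 ?dot_gt0.
have sq_gt0 : 0 < (f - 2%:R^-1) ^+ 2 by rewrite lt_def sqr_ge0 sqrf_eq0 subr_eq0 f_neq_half.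
have complete_square : dot a a * dot n n * (f - 2%:R^-1) ^+ 2 =
  dot a a * dot n n * (f ^+ 2 - f) + dot a a * dot n n / 4%:R by field.
have := mulr_gt0 k_gt0 sq_gt0; rewrite complete_square; move: CC3; lra.
Qed.

End TwinEquation.

Theorem corollary1 (R : realType) (U Rh : 'M[R]_3) (e a n : 'cV[R]_3) :
  sym_posdef U ->
  dot e e = 1 ->
  rot3 Rh ->
  a != 0 -> n != 0 ->
  Rh *m ((- 1%:M + 2%:R *: tens e e) *m U *m (- 1%:M + 2%:R *: tens e e))
    = U + tens a n ->
  (exists u1 u3 : R, ordered_eigs U u1 1 u3) ->
  (a^T *m U *m cofmx (U *m U - 1%:M) *m n) 0 0 = 0 ->
  0 <= \tr (U *m U) - \det (U *m U) - dot a a * dot n n / 4%:R - 2%:R ->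
  (forall f : R, 0 <= f -> f <= 1 -> f != 2%:R^-1 ->
     forall s1 s2 s3 : R, ordered_eigs (Cf U a n f) s1 s2 s3 ->
       s2 = 1 /\ s1 < 1 /\ 1 < s3)
  /\
  (forall u1 u2 u3 : R, ordered_eigs U u1 u2 u3 -> u1 < 1 /\ 1 < u3).
Proof.
move=> posU e1 rotRh a_neq0 n_neq0 twin [v1 [v3 eigU1]] CC2 CC3.
have symU : U^T = U by case: posU.
rewrite -/(half_turn e) in twin.
have CC1 : \det (1%:M - U) = 0 by rewrite (ordered_eigs_det_sub eigU1) subrr mulr0 mul0r.
have middle := Cf_middle_eig symU (tr_half_turn e) (half_turn_invol e e1) rotRh twin CC1 CC2
  a_neq0 n_neq0 CC3.
split=> [f _ _ f_neq_half s1 s2 s3 /(middle _ _ _ _ f_neq_half)[]//|u1 u2 u3 eigU].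
have u1_gt0 : 0 < u1.
  by apply: sym_posdef_eig_gt0 posU _; rewrite (ordered_eigs_det_sub eigU) subrr !mul0r.
have u3_gt0 : 0 < u3 by case: eigU => le12 [le23 _]; lra.
have Cf0 : Cf U a n 0 = U *m U by rewrite /Cf !scale0r !addr0.
have zero_neq_half : (0 : R) != 2%:R^-1 by rewrite eq_sym invr_eq0 pnatr_eq0.
have := ordered_eigs_sqr eigU (ltW u1_gt0); rewrite -Cf0 => /(middle _ _ _ _ zero_neq_half)[_].
by split; nra.
Qed.
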